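(* Let $k,\ell \geq 0$ be integers and let $F$ be a field of characteristic zero. For $n \ge 0$ let $H_n(k,\ell)$ be the set of partitions $\lambda=(\lambda_1,\dots,\lambda_m)$ of $n$ such that $\lambda_{k+i} \le \ell$ for all $i=1,\dots,m-k$ (i.e. partitions whose Young diagram fits inside the $(k,\ell)$-hook). For a partition $\lambda$, define the hook Schur function $$HS_\lambda(x_1,\dots,x_k;y_1,\dots,y_\ell) = \sum_{\mu \subseteq \lambda} s_\mu(x_1,\dots,x_k)\, s_{\lambda'/\mu'}(y_1,\dots,y_\ell),$$ where $s_\nu$ denotes the (skew) Schur polynomial and $\lambda'/\mu'$ is the conjugate of the skew shape $\lambda/\mu$. Let $\Lambda_n^{(k,\ell)} = \mathrm{span}_F\{HS_\lambda(x_1,\dots,x_k;y_1,\dots,y_\ell) : \lambda \in H_n(k,\ell)\}$ and $\Lambda^{(k,\ell)} = \bigoplus_{n \ge 0} \Lambda_n^{(k,\ell)}$. Let $G_{k,\ell}(t) = \sum_{n\ge 0} |H_n(k,\ell)|\, t^n$ be the generating function of partitions fitting in the $(k,\ell)$-hook, which equals the Hilbert series $\sum_{n \ge 0} \dim_F \Lambda_n^{(k,\ell)}\, t^n$ of $\Lambda^{(k,\ell)}$. Then $$G_{k,\ell}(t) = A^{k,\ell}(t) \prod_{i=1}^{k+\ell} \frac{1}{1-t^i},$$ where $$A^{k,\ell}(t) = 1 + \sum_{i=1}^{\ell} t^{i(k+\ell+1)} \begin{bmatrix} k \\ i \end{bmatrix}_t \sum_{j=0}^{\ell-i} t^{j(k-i+1)}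 \begin{bmatrix} i+j-1 \\ j \end{bmatrix}_t .$$
   Context: For integers $a,b$, the $t$-binomial coefficient is $\begin{bmatrix} a \\ b \end{bmatrix}_t = \frac{(t;t)_a}{(t;t)_b (t;t)_{a-b}}$ when $0 \le b \le a$ and $0$ otherwise, where $(x;t)_n = (1-x)(1-xt)\cdots(1-xt^{n-1})$ and $(x;t)_0=1$. Equivalently, $A^{k,\ell}(t)$ is determined by $A^{k,0}(t)=1$ and $A^{k,\ell}(t) = (1-t^{k+\ell})A^{k,\ell-1}(t) + t^{\ell(k+1)}\begin{bmatrix} k+\ell \\ \ell \end{bmatrix}_t$ for $\ell\ge1$. The hook Schur functions $HS_\lambda$ with $\lambda\in H_n(k,\ell)$ are linearly independent (Berele–Regev), so $\dim_F\Lambda_n^{(k,\ell)} = |H_n(k,\ell)|$. *)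

From mathcomp Require Import all_boot all_order all_algebra.
Set Implicit Arguments. Unset Strict Implicit. Unset Printing Implicit Defensive.
Import GRing.Theory.
Local Open Scope ring_scope.

(* A partition of n is encoded as a nonincreasing n-tuple of naturals (each
   <= n), padded with zeros, summing to n.  Partitions of n have at most n
   nonzero parts, so this is a bijection with the partitions of n.
   The (k,l)-hook condition lambda_{k+i} <= l (i >= 1, 1-indexed) is that all
   entries from 0-based index k on are <= l (padding zeros satisfy it). *)
Definition parts_of {n : nat} (t : n.-tuple 'I_n.+1) : seq nat :=
  [seq nat_of_ord i | i <- t].

Definition in_hook (k l : nat) {n : nat} (t : n.-tuple 'I_n.+1) : bool :=
  [&& sorted geq (parts_of t), sumn (parts_of t) == n
    & all (fun x => x <= l)%N (drop k (parts_of t))].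

Definition H_card (k l n : nat) : nat := #|[set t : n.-tuple 'I_n.+1 | in_hook k l t]|.

Definition G_trunc (k l n : nat) : {poly rat} :=
  \sum_(0 <= m < n.+1) (H_card k l m)%:R *: 'X^m.

Definition qpoch (a : nat) : {poly rat} := \prod_(1 <= i < a.+1) (1 - 'X^i).

Definition qbinom (a b : nat) : {poly rat} :=
  if (b <= a)%N then qpoch a %/ (qpoch b * qpoch (a - b)) else 0.

Definition Apoly (k l : nat) : {poly rat} :=
  1 + \sum_(1 <= i < l.+1)
        ('X^(i * (k + l + 1)) * qbinom k i *
          \sum_(0 <= j < (l - i).+1) ('X^(j * (k - i + 1)) * qbinom (i + j - 1) j)).

(* Classifying a partition in the (k,l)-hook by its (k+1)-st part j <= l gives
   G_{k,l}(t) = sum_{j<=l} t^{j(k+1)} / ((t;t)_k (t;t)_j), hence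
   G_{k,l}(t) (t;t)_{k+l} = sum_{j<=l} t^{j(k+1)} [k+j, j]_t (t^{k+j+1};t)_{l-j}.
   This sum obeys the recursion A^{k,l+1} = (1 - t^{k+l+1}) A^{k,l}
   + t^{(l+1)(k+1)} [k+l+1, l+1]_t, and so does A^{k,l}: the inner sums over j
   telescope, and q-Vandermonde adds up the boundary terms. Power series are
   compared through their coefficients up to degree n, and a partition of size
   at most n has at most n parts, each at most n. *)

From mathcomp Require Import all_boot all_order all_algebra.
From mathcomp Require Import ring zify.
Set Implicit Arguments. Unset Strict Implicit. Unset Printing Implicit Defensive.
Import GRing.Theory.
Local Open Scope ring_scope.

Section GaussianBinomial.
Variable R : comNzRingType.

Fixpoint gauss (N r : nat) : {poly R} :=
  match N, r with
  | _, 0 => 1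
  | 0, _.+1 => 0
  | N'.+1, r'.+1 => gauss N' r' + 'X^(r'.+1) * gauss N' r'.+1
  end.

Lemma gauss0 N : gauss N 0 = 1. Proof. by case: N. Qed.

Lemma gaussS N r : gauss N.+1 r.+1 = gauss N r + 'X^(r.+1) * gauss N r.+1.
Proof. by []. Qed.

Lemma gauss_small N r : (N < r)%N -> gauss N r = 0.
Proof.
elim: N r => [|N IH] [|r] //= ltNr.
by rewrite !IH ?mulr0 ?addr0 // ltnW.
Qed.

Lemma gaussnn N : gauss N N = 1.
Proof. by elim: N => //= N ->; rewrite gauss_small // mulr0 addr0. Qed.

Lemma gauss_hockey L T :
  \sum_(0 <= x < T.+1) 'X^x * gauss (L + x) x = gauss (L.+1 + T) T.
Proof.
elim: T => [|T IH]; first by rewrite big_nat1 !gauss0 mulr1.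
by rewrite big_nat_recr //= IH addnS gaussS.
Qed.

Lemma gauss_vandermonde m n r :
  gauss (m + n) r = \sum_(i < r.+1) 'X^(i * (n + i - r)) * gauss m i * gauss n (r - i).
Proof.
elim: n r => [|n IH] r.
  rewrite big_ord_recr subnn gauss0 mulr1 muln0 expr0 mul1r addn0 big1 => [|i _].
    by rewrite /= add0r.
  by rewrite (@gauss_small 0 (r - i)) ?mulr0 // subn_gt0.
rewrite addnS; case: r => [|r]; first by rewrite big_ord1 /= !gauss0 mul0n expr0 !mulr1.
rewrite gaussS !IH [in RHS]big_ord_recr subnn gauss0 mulr1.
rewrite [X in _ + 'X^_ * X = _]big_ord_recr subnn gauss0 mulr1.
rewrite mulrDr addrA; congr (_ + _); last by rewrite mulrA -exprD; congr ('X^_ * _) => /=; lia.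
rewrite mulr_sumr -big_split /=; apply: eq_bigr => [[i /= lti]] _.
rewrite subSn // mulrDr; congr (_ + _).
have [leri|ltir] := leqP r.+1 (n + i); last by rewrite (@gauss_small n (r - i).+1) ?mulr0 //; lia.
rewrite [RHS](_ : _ = 'X^(i * (n.+1 + i - r.+1) + (r - i).+1)
  * gauss m i * gauss n (r - i).+1); last by rewrite exprD; ring.
rewrite !mulrA -exprD; congr ('X^_ * _ * _); rewrite addSn subSS.
by rewrite (_ : n + i - r = (n + i - r.+1).+1)%N ?mulnS; lia.
Qed.

End GaussianBinomial.

Arguments gauss {R}.

Lemma qpoch0 : qpoch 0 = 1.
Proof. by rewrite /qpoch big_geq. Qed.

Lemma qpochS n : qpoch n.+1 = qpoch n * (1 - 'X^(n.+1)).
Proof. by rewrite /qpoch big_nat_recr. Qed.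

Lemma qpoch_split s N : (s <= N)%N ->
  qpoch N = qpoch s * \prod_(s.+1 <= i < N.+1) (1 - 'X^i).
Proof. by move=> lesN; rewrite /qpoch -big_cat_nat. Qed.

Lemma qpoch_neq0 n : qpoch n != 0.
Proof.
elim: n => [|n IH]; first by rewrite qpoch0 oner_neq0.
rewrite qpochS mulf_neq0 //; apply/eqP => /(congr1 (coefp 0)) /eqP.
by rewrite /= coefB coef1 coefXn subr0 coef0 oner_eq0.
Qed.

Lemma gauss_qpoch N r : (r <= N)%N ->
  gauss N r * qpoch r * qpoch (N - r) = qpoch N.
Proof.
elim: N r => [|N IH] [|r] //=; rewrite ?qpoch0 ?subn0 ?mulr1 ?mul1r // ltnS => lerN.
case: ltngtP lerN => // [ltrN|->] _; last first.
  by rewrite gaussnn gauss_small // subnn qpoch0 qpochS; ring.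
have qpochNr : qpoch (N - r) = qpoch (N - r.+1) * (1 - 'X^(N - r)).
  by rewrite -[in LHS](subnSK ltrN) qpochS subnSK.
have XNr : 'X^(r.+1) * 'X^(N - r) = 'X^(N.+1) :> {poly rat}.
  by rewrite -exprD addSn subnKC // ltnW.
have E1 : gauss N r * qpoch r.+1 * qpoch (N - r) = qpoch N * (1 - 'X^(r.+1)).
  by rewrite qpochS -(IH r (ltnW ltrN)); ring.
have E2 : 'X^(r.+1) * gauss N r.+1 * qpoch r.+1 * qpoch (N - r)
    = 'X^(r.+1) * qpoch N * (1 - 'X^(N - r)).
  by rewrite qpochNr -(IH _ ltrN); ring.
by rewrite subSS !mulrDl E1 E2 qpochS -XNr; ring.
Qed.

Lemma qbinom_gauss N r : qbinom N r = gauss N r.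
Proof.
rewrite /qbinom; case: ifP => [lerN|/negbT]; last by rewrite -ltnNge => /gauss_small ->.
by rewrite -(gauss_qpoch lerN) -mulrA mulpK // mulf_neq0 // qpoch_neq0.
Qed.

Lemma gauss_ratio k i : (0 < i <= k.+1)%N ->
  (1 - 'X^i) * gauss k i = (1 - 'X^(k.+1 - i)) * gauss k i.-1 :> {poly rat}.
Proof.
case: i => // i /andP[_]; rewrite ltnS /= => leik.
case: ltngtP leik => // [ltik|->] _; last by rewrite gauss_small // subnn subrr !mul0r mulr0.
apply: (@mulIf _ (qpoch i * qpoch (k - i.+1))); first by rewrite mulf_neq0 ?qpoch_neq0.
have qpoch_ki : qpoch (k - i) = qpoch (k - i.+1) * (1 - 'X^(k.+1 - i.+1)).
  by rewrite subSS -[in LHS](subnSK ltik) qpochS subnSK.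
transitivity (qpoch k); first by rewrite -(gauss_qpoch ltik) qpochS; ring.
by rewrite -(gauss_qpoch (ltnW ltik)) qpoch_ki; ring.
Qed.

Definition apoly_term k L i j : {poly rat} :=
  'X^(i * (k + L + 1)) * gauss k i * ('X^(j * (k - i + 1)) * gauss (i + j - 1) j).

Definition apoly_row k L i : {poly rat} := \sum_(0 <= j < L.+1 - i) apoly_term k L i j.

Definition apoly_antidiff k L i j : {poly rat} :=
  'X^(i * (k + L) + j * (k.+1 - i)) * gauss k i.-1 * gauss (i + j - 1) j.

Lemma Apoly_rows k l : Apoly k l = 1 + \sum_(0 <= i < l) apoly_row k l i.+1.
Proof.
rewrite /Apoly big_add1 /=; congr (_ + _); apply: eq_big_nat => i /andP[_ ltil].
rewrite qbinom_gauss mulr_sumr /apoly_row subSS (_ : (l - i.+1).+1 = l - i)%N; last by lia.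
by apply: eq_bigr => j _; rewrite qbinom_gauss.
Qed.

Lemma apoly_row0 k l : apoly_row k l 0 = 1.
Proof.
rewrite /apoly_row subn0 big_nat_recl // big1 => [|j _].
  by rewrite /apoly_term !mul0n !expr0 gauss0 !mul1r addr0.
by rewrite /apoly_term add0n subn1 (@gauss_small _ j) ?mulr0.
Qed.

Lemma apoly_row_out k l : apoly_row k l l.+1 = 0.
Proof. by rewrite /apoly_row subnn big_geq. Qed.

(* [k - i + 1] and [k.+1 - i] differ only at [i = k.+1], where [gauss k i = 0]. *)
Lemma apoly_termE k L i j : (i <= k.+1)%N ->
  apoly_term k L i j = 'X^(i * (k + L + 1) + j * (k.+1 - i)) * gauss k i * gauss (i + j - 1) j.
Proof.
rewrite /apoly_term; case: ltngtP => // [ltik|->] _; last by rewrite gauss_small // !(mulr0, mul0r).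
by rewrite exprD (_ : k - i + 1 = k.+1 - i)%N; [ring | lia].
Qed.

Lemma apoly_term_step k l i j :
  apoly_term k l.+1 i.+1 j - apoly_term k l i.+1 j + 'X^(k + l.+1) * apoly_term k l i j.+1
  = apoly_antidiff k l.+1 i.+1 j.+1 - apoly_antidiff k l.+1 i.+1 j.
Proof.
have [leik|ltki] := leqP i k; last first.
  rewrite /apoly_term /apoly_antidiff /= (@gauss_small _ k i.+1 (ltnW ltki)).
  by rewrite (@gauss_small _ k i ltki) !(mulr0, mul0r, subrr, addr0).
have [s ->] : exists s, k = (i + s)%N by exists (k - i)%N; lia.
have := @gauss_ratio (i + s) i.+1 (leq_addr _ _).
rewrite !apoly_termE ?ltnS ?leq_addr ?leqW ?leq_addr // /apoly_antidiff /=.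
have -> : ((i + s).+1 - i.+1 = s)%N by lia.
have -> : ((i + s).+1 - i = s.+1)%N by lia.
have -> : (i + j.+1 - 1 = i + j)%N by lia.
have -> : (i.+1 + j - 1 = i + j)%N by lia.
have -> : (i.+1 + j.+1 - 1 = (i + j).+1)%N by lia.
rewrite gaussS => ratio.
set E := (i.+1 * (i + s + l.+1) + j * s)%N.
have -> : 'X^(i.+1 * (i + s + l.+1 + 1) + j * s) = 'X^E * 'X^(i.+1) :> {poly rat}.
  by rewrite -exprD /E; congr 'X^_; ring.
have -> : 'X^(i.+1 * (i + s + l + 1) + j * s) = 'X^E :> {poly rat}.
  by rewrite /E; congr 'X^_; ring.
have -> : 'X^(i.+1 * (i + s + l.+1) + j.+1 * s) = 'X^E * 'X^s :> {poly rat}.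
  by rewrite -exprD /E; congr 'X^_; ring.
have -> : 'X^(i + s + l.+1) * ('X^(i * (i + s + l + 1) + j.+1 * s.+1)
      * gauss (i + s) i * gauss (i + j) j.+1)
    = 'X^E * 'X^s * 'X^(j.+1) * gauss (i + s) i * gauss (i + j) j.+1 :> {poly rat}.
  by rewrite !mulrA -!exprD /E; congr ('X^_ * _ * _); ring.
apply/subr0_eq; transitivity ('X^E * gauss (i + j) j *
  ((1 - 'X^s) * gauss (i + s) i - (1 - 'X^(i.+1)) * gauss (i + s) i.+1) : {poly rat}).
  by ring.
by rewrite ratio subrr mulr0.
Qed.

Lemma apoly_row_step k l i : (i <= l)%N ->
  apoly_row k l.+1 i.+1 - apoly_row k l i.+1 + 'X^(k + l.+1) * apoly_row k l i
  = apoly_term k l.+1 i.+1 (l - i) + apoly_antidiff k l.+1 i.+1 (l - i).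
Proof.
move=> leil; rewrite /apoly_row !subSS subSn // big_nat_recr //= [X in _ * X]big_nat_recl //.
rewrite mulrDr.
have -> : 'X^(k + l.+1) * apoly_term k l i 0 = apoly_antidiff k l.+1 i.+1 0.
  rewrite /apoly_term /apoly_antidiff /= !mul0n !expr0 !addn0 !gauss0 !mulr1 mulrA -exprD.
  by congr ('X^_ * _); lia.
set S1 := \sum_(0 <= j < l - i) apoly_term k l.+1 i.+1 j.
set S2 := \sum_(0 <= j < l - i) apoly_term k l i.+1 j.
set S3 := \sum_(0 <= j < l - i) apoly_term k l i j.+1.
have telescope : S1 - S2 + 'X^(k + l.+1) * S3
    = apoly_antidiff k l.+1 i.+1 (l - i) - apoly_antidiff k l.+1 i.+1 0.
  rewrite mulr_sumr -sumrB -big_split /=.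
  by apply: telescope_sumr_eq => // j _; rewrite apoly_term_step.
transitivity (S1 - S2 + 'X^(k + l.+1) * S3 + apoly_term k l.+1 i.+1 (l - i)
  + apoly_antidiff k l.+1 i.+1 0); first ring.
by rewrite telescope; ring.
Qed.

Lemma apoly_boundary k l :
  \sum_(0 <= i < l.+1) (apoly_term k l.+1 i.+1 (l - i) + apoly_antidiff k l.+1 i.+1 (l - i))
  = 'X^(l.+1 * k.+1) * gauss (k + l.+1) l.+1.
Proof.
rewrite addnS -addSn gauss_vandermonde big_ord_recl /= gauss_small ?mulr0 ?add0r //.
rewrite mulr_sumr big_mkord; apply: eq_bigr => -[i /= ltil] _.
rewrite /bump /= add0n add1n.
have [leik|ltki] := leqP i k; last first.
  rewrite /apoly_term /apoly_antidiff /= (@gauss_small _ k i.+1 (ltnW ltki)).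
  by rewrite (@gauss_small _ k i ltki) !(mulr0, mul0r, addr0, add0r).
rewrite apoly_termE ?ltnS // /apoly_antidiff /=.
have [s ->] : exists s, k = (i + s)%N by exists (k - i)%N; lia.
have [t ->] : exists t, l = (i + t)%N by exists (l - i)%N; lia.
rewrite (_ : i + t - i = t)%N; last by lia.
rewrite (_ : (i + s).+1 - i.+1 = s)%N; last by lia.
rewrite (_ : i.+1 + t - 1 = i + t)%N; last by lia.
rewrite (_ : (i + t).+1 - i.+1 = t)%N; last by lia.
rewrite (_ : i + t + i.+1 - (i + t).+1 = i)%N; last by lia.
set b := ((i + t).+1 * (i + s).+1)%N; set c := (i.+1 * i)%N.
rewrite (_ : i.+1 * (i + s + (i + t).+1) + t * s = b + c)%N; last by rewrite /b /c; ring.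
rewrite (_ : i.+1 * (i + s + (i + t).+1 + 1) + t * s = b + c + i.+1)%N; last first.
  by rewrite /b /c; ring.
by rewrite !exprD; ring.
Qed.

Lemma Apoly_rec k l : Apoly k l.+1
  = (1 - 'X^(k + l.+1)) * Apoly k l + 'X^(l.+1 * k.+1) * qbinom (k + l.+1) l.+1.
Proof.
rewrite qbinom_gauss -apoly_boundary.
have rows_from1 : Apoly k l = 1 + \sum_(0 <= i < l.+1) apoly_row k l i.+1.
  by rewrite Apoly_rows big_nat_recr //= apoly_row_out addr0.
have rows_from0 : Apoly k l = \sum_(0 <= i < l.+1) apoly_row k l i.
  by rewrite Apoly_rows big_nat_recl // apoly_row0.
have rows_step : \sum_(0 <= i < l.+1) apoly_row k l.+1 i.+1
    = \sum_(0 <= i < l.+1) apoly_row k l i.+1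
      - 'X^(k + l.+1) * \sum_(0 <= i < l.+1) apoly_row k l i
      + \sum_(0 <= i < l.+1) (apoly_term k l.+1 i.+1 (l - i) + apoly_antidiff k l.+1 i.+1 (l - i)).
  rewrite mulr_sumr -sumrB -big_split /=; apply: eq_big_nat => i /andP[_ ltil].
  by rewrite -apoly_row_step //; ring.
rewrite Apoly_rows rows_step mulrBl mul1r {1}rows_from1 rows_from0; ring.
Qed.

Definition hook_numer k l : {poly rat} := \sum_(0 <= j < l.+1)
  'X^(j * k.+1) * gauss (k + j) j * \prod_((k + j).+1 <= i < (k + l).+1) (1 - 'X^i).

Lemma Apoly_hook_numer k l : Apoly k l = hook_numer k l.
Proof.
elim: l => [|l IH].
  rewrite Apoly_rows big_geq // addr0 /hook_numer big_nat1 big_geq ?addn0 //.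
  by rewrite mul0n expr0 gauss0 !mulr1.
rewrite Apoly_rec IH /hook_numer [in RHS]big_nat_recr //= [X in _ = _ + _ * X]big_geq //.
rewrite mulr1 qbinom_gauss addnS; congr (_ + _).
rewrite mulr_sumr; apply: eq_big_nat => j /andP[_ ltjl].
by rewrite [in RHS]big_nat_recr /=; [ring | lia].
Qed.

Section TruncatedEquality.
Variable R : comNzRingType.
Implicit Types (p q : {poly R}) (d : nat).

Definition eq_upto d p q := all (fun i => p`_i == q`_i) (iota 0 d.+1).

Lemma eq_uptoP d p q : reflect (forall i, (i <= d)%N -> p`_i = q`_i) (eq_upto d p q).
Proof.
apply: (iffP allP) => [epq i lei | epq i]; last by rewrite mem_iota => /epq ->.
by apply/eqP/epq; rewrite mem_iota.
Qed.

Lemma eq_upto_refl d p : eq_upto d p p.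
Proof. exact/eq_uptoP. Qed.

Lemma eq_upto_sym d p q : eq_upto d p q -> eq_upto d q p.
Proof. by move=> /eq_uptoP epq; apply/eq_uptoP => i lei; rewrite epq. Qed.

Lemma eq_upto_trans d p q r : eq_upto d p q -> eq_upto d q r -> eq_upto d p r.
Proof. by move=> /eq_uptoP epq /eq_uptoP eqr; apply/eq_uptoP => i lei; rewrite epq ?eqr. Qed.

Lemma eq_uptoD d p1 q1 p2 q2 :
  eq_upto d p1 q1 -> eq_upto d p2 q2 -> eq_upto d (p1 + p2) (q1 + q2).
Proof. by move=> /eq_uptoP e1 /eq_uptoP e2; apply/eq_uptoP => i lei; rewrite !coefD e1 ?e2. Qed.

Lemma eq_uptoM d p1 q1 p2 q2 :
  eq_upto d p1 q1 -> eq_upto d p2 q2 -> eq_upto d (p1 * p2) (q1 * q2).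
Proof.
move=> /eq_uptoP e1 /eq_uptoP e2; apply/eq_uptoP => i lei.
rewrite !coefM; apply: eq_bigr => -[j /= ltji] _.
by rewrite e1 ?e2 ?(leq_trans (leq_subr _ _)) // (leq_trans _ lei) // -ltnS.
Qed.

Lemma eq_upto_sum d (I : Type) (r : seq I) (P : pred I) (F G : I -> {poly R}) :
  (forall i, P i -> eq_upto d (F i) (G i)) ->
  eq_upto d (\sum_(i <- r | P i) F i) (\sum_(i <- r | P i) G i).
Proof.
move=> eFG; elim: r => [|x r IH]; first by rewrite !big_nil eq_upto_refl.
by rewrite !big_cons; case: ifP => Px //; apply: eq_uptoD (eFG x Px) IH.
Qed.

Lemma eq_upto_sum_nat d m n (F G : nat -> {poly R}) :
  (forall j, (m <= j < n)%N -> eq_upto d (F j) (G j)) ->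
  eq_upto d (\sum_(m <= j < n) F j) (\sum_(m <= j < n) G j).
Proof.
by move=> eFG; rewrite !big_seq; apply: eq_upto_sum => j; rewrite mem_index_iota; apply: eFG.
Qed.

Lemma eq_uptoXnM d e p q : eq_upto (d - e) p q -> eq_upto d ('X^e * p) ('X^e * q).
Proof.
move=> /eq_uptoP epq; apply/eq_uptoP => i lei.
by rewrite !coefXnM; case: ifP => // _; rewrite epq ?leq_sub2r.
Qed.

Lemma eq_uptoXnM0 d e p : (d < e)%N -> eq_upto d ('X^e * p) 0.
Proof.
by move=> ltde; apply/eq_uptoP => i lei; rewrite coefXnM coef0 ifT // (leq_ltn_trans lei).
Qed.

Lemma eq_upto_prod1 d m n : (d < m)%N -> eq_upto d (\prod_(m <= i < n) (1 - 'X^i)) 1.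
Proof.
move=> ltdm; rewrite big_seq_cond; apply: (big_ind (fun p => eq_upto d p 1)).
- exact: eq_upto_refl.
- by move=> p q ep eq; rewrite -[1](mulr1 1); apply: eq_uptoM.
move=> i /andP[]; rewrite mem_index_iota => /andP[lemi _] _; apply/eq_uptoP => j lejd.
rewrite coefB coef1 coefXn (_ : (j == i) = false) ?subr0 //.
by apply/negbTE; rewrite neq_ltn (leq_ltn_trans lejd) // (leq_trans ltdm).
Qed.

Lemma eq_upto_inv_uniq d u p q :
  eq_upto d (p * u) 1 -> eq_upto d (q * u) 1 -> eq_upto d p q.
Proof.
move=> epu equ; apply: (@eq_upto_trans _ _ (p * (q * u))).
  by rewrite -{1}[p]mulr1; apply: eq_uptoM (eq_upto_refl _ _) (eq_upto_sym equ).
by rewrite mulrCA -{2}[q]mulr1; apply: eq_uptoM (eq_upto_refl _ _) epu.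
Qed.

End TruncatedEquality.

Lemma gauss_qpoch_subn_upto d N r : (r <= N)%N -> (d <= r)%N ->
  eq_upto d (gauss N r * qpoch (N - r)) 1.
Proof.
move=> lerN ledr.
suff -> : gauss N r * qpoch (N - r) = \prod_(r.+1 <= i < N.+1) (1 - 'X^i).
  exact: eq_upto_prod1.
apply: (@mulIf _ (qpoch r)); first exact: qpoch_neq0.
by rewrite mulrAC gauss_qpoch // (qpoch_split lerN) mulrC.
Qed.

Lemma gauss_qpoch_upto d N r : (r <= N)%N -> (d <= N - r)%N ->
  eq_upto d (gauss N r * qpoch r) 1.
Proof.
move=> lerN ledNr.
suff -> : gauss N r * qpoch r = \prod_((N - r).+1 <= i < N.+1) (1 - 'X^i).
  exact: eq_upto_prod1.
apply: (@mulIf _ (qpoch (N - r))); first exact: qpoch_neq0.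
by rewrite gauss_qpoch // (qpoch_split (leq_subr r N)) mulrC.
Qed.

(* [gauss (a + n) n] enumerates partitions with at most [n] parts, all [<= a];
   below degree [n + 1] the bound on the number of parts is invisible. *)
Definition inv_qpoch n a : {poly rat} := gauss (a + n) n.

Lemma inv_qpochP d n a : (d <= n)%N -> eq_upto d (inv_qpoch n a * qpoch a) 1.
Proof. by move=> ledn; have := gauss_qpoch_subn_upto (leq_addl a n) ledn; rewrite addnK. Qed.

Lemma inv_qpoch0 n : inv_qpoch n 0 = 1.
Proof. by rewrite /inv_qpoch add0n gaussnn. Qed.

Definition G_approx n k l : {poly rat} :=
  \sum_(0 <= j < l.+1) 'X^(j * k.+1) * (inv_qpoch n k * inv_qpoch n j).

Lemma G_approx_qpoch n k l :
  eq_upto n (G_approx n k l * qpoch (k + l)) (hook_numer k l).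
Proof.
rewrite /G_approx /hook_numer mulr_suml; apply: eq_upto_sum_nat => j /andP[_].
rewrite ltnS => lejl.
rewrite (@qpoch_split (k + j) (k + l)) ?leq_add2l // -(@gauss_qpoch (k + j) j) ?leq_addl //.
rewrite addnK.
set P := \prod_(_ <= i < _) _.
rewrite [X in eq_upto _ X](_ : _ = 'X^(j * k.+1) * ((inv_qpoch n k * qpoch k)
  * (inv_qpoch n j * qpoch j)) * (gauss (k + j) j * P)); last by ring.
rewrite [X in eq_upto _ _ X](_ : _ = 'X^(j * k.+1) * (1 * 1) * (gauss (k + j) j * P)); last first.
  by ring.
apply: eq_uptoM; last exact: eq_upto_refl.
apply: eq_uptoM; first exact: eq_upto_refl.
by apply: eq_uptoM; apply: inv_qpochP.
Qed.

Lemma big_tuple_cons (R : Type) (idx : R) (op : Monoid.com_law idx) (T : finType) n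
    (F : n.+1.-tuple T -> R) :
  \big[op/idx]_(t : n.+1.-tuple T) F t
  = \big[op/idx]_(x : T) \big[op/idx]_(t : n.-tuple T) F [tuple of x :: t].
Proof.
rewrite pair_big /= (reindex (fun p : T * n.-tuple T => [tuple of p.1 :: p.2])) //=.
exists (fun t : n.+1.-tuple T => (thead t, [tuple of behead t])).
  by move=> [x t] _ /=; congr (_, _); apply: val_inj.
by move=> t _; apply: val_inj => /=; rewrite [in RHS](tuple_eta t).
Qed.

Lemma big_tuple0 (R : Type) (idx : R) (op : Monoid.com_law idx) (T : finType)
    (F : 0.-tuple T -> R) :
  \big[op/idx]_(t : 0.-tuple T) F t = F [tuple].
Proof. by rewrite (big_pred1 [tuple]) // => t; apply/esym/eqP; apply: tuple0. Qed.

Lemma sorted_geq_cons (x : nat) s :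
  sorted geq (x :: s) = all (geq x) s && sorted geq s.
Proof. by rewrite /= path_sortedE // => a b c /= leba lecb; apply: leq_trans lecb leba. Qed.

Definition in_hook_box k l top (s : seq nat) : bool :=
  [&& sorted geq s, all (geq top) s & all (geq l) (drop k s)].

Lemma in_hook_boxS_cons k l top x s :
  in_hook_box k.+1 l top (x :: s) = (x <= top)%N && in_hook_box k l x s.
Proof.
rewrite /in_hook_box sorted_geq_cons /=.
case lext: (x <= top)%N; rewrite ?andbF //=.
case: (boolP (all (geq x) s)) => [lesx|]; rewrite ?andbF //=.
by rewrite (sub_all _ lesx) // => y /= leyx; apply: leq_trans leyx lext.
Qed.

Lemma in_hook_box0_cons l top x s :
  in_hook_box 0 l top (x :: s) = (x <= minn l top)%N && in_hook_box 0 l x s.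
Proof.
rewrite /in_hook_box !drop0 sorted_geq_cons /= leq_min.
case lext: (x <= top)%N; case lexl: (x <= l)%N; rewrite ?andbF ?andbT //=.
case: (boolP (all (geq x) s)) => [lesx|]; rewrite ?andbF //=.
rewrite !(sub_all _ lesx) // => y /= leyx; first exact: leq_trans leyx lexl.
exact: leq_trans leyx lext.
Qed.

Definition hook_gf k l B len top : {poly rat} :=
  \sum_(t : len.-tuple 'I_B | in_hook_box k l top (map val t)) 'X^(sumn (map val t)).

Lemma hook_gf_len0 k l B top : hook_gf k l B 0 top = 1.
Proof. by rewrite /hook_gf big_mkcond big_tuple0 /= /in_hook_box; case: k. Qed.

Lemma hook_gf_cons k k' l B len top (Q : pred nat) :
  (forall x s, in_hook_box k l top (x :: s) = Q x && in_hook_box k' l x s) ->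
  hook_gf k l B len.+1 top = \sum_(x : 'I_B | Q x) 'X^x * hook_gf k' l B len x.
Proof.
move=> consE; rewrite /hook_gf big_mkcond big_tuple_cons [RHS]big_mkcond.
apply: eq_bigr => x _ /=; case Qx: (Q x); last by rewrite big1 // => t _; rewrite consE Qx.
rewrite mulr_sumr [RHS]big_mkcond; apply: eq_bigr => t _.
by rewrite consE Qx /=; case: ifP; rewrite ?mulr0 // exprD.
Qed.

Lemma sum_ord_leq B m (F : nat -> {poly rat}) : (m < B)%N ->
  \sum_(x : 'I_B | (x <= m)%N) F x = \sum_(0 <= x < m.+1) F x.
Proof.
move=> ltmB; rewrite -(big_mkord (fun x => x <= m)%N) (big_nat_widen _ _ _ _ _ ltmB).
by apply: eq_bigl => x; rewrite ltnS.
Qed.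

Lemma hook_gfS k l B len top : (top < B)%N ->
  hook_gf k.+1 l B len.+1 top = \sum_(0 <= x < top.+1) 'X^x * hook_gf k l B len x.
Proof.
move=> lttopB; rewrite (@hook_gf_cons _ k _ _ _ _ (fun x => x <= top)%N).
  by rewrite (sum_ord_leq (fun x => 'X^x * hook_gf k l B len x)).
by move=> x s; rewrite in_hook_boxS_cons.
Qed.

Lemma hook_gf0S l B len top : (minn l top < B)%N ->
  hook_gf 0 l B len.+1 top
  = \sum_(0 <= x < (minn l top).+1) 'X^x * hook_gf 0 l B len x.
Proof.
move=> ltmB; rewrite (@hook_gf_cons _ 0 _ _ _ _ (fun x => x <= minn l top)%N).
  by rewrite (sum_ord_leq (fun x => 'X^x * hook_gf 0 l B len x)).
by move=> x s; rewrite in_hook_box0_cons.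
Qed.

Lemma hook_gf0 l B len top : (top < B)%N ->
  hook_gf 0 l B len top = gauss (len + minn l top) (minn l top).
Proof.
elim: len top => [|len IH] top lttopB; first by rewrite hook_gf_len0 gaussnn.
rewrite hook_gf0S ?(leq_ltn_trans (geq_minr _ _)) // -gauss_hockey.
apply: eq_big_nat => x /andP[_ ltxm]; have lexm : (x <= minn l top)%N by rewrite -ltnS.
rewrite IH ?(leq_ltn_trans (leq_trans lexm (geq_minr _ _))) //.
by rewrite (minn_idPr (leq_trans lexm (geq_minl _ _))).
Qed.

(* Splitting by [j], the [(k+1)]-st part: removing [j] from each of the first
   [k] parts leaves a partition in a [k x (top - j)] box, and the parts after
   the [k]-th form a partition with largest part exactly [j]. *)
Definition hook_box_gf k l len top : {poly rat} :=
  if (len <= k)%N then gauss (len + top) top else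
  \sum_(0 <= j < (minn l top).+1)
     'X^(j * k.+1) * gauss (k + (top - j)) (top - j) * gauss (len - k.+1 + j) j.

Lemma sum_minn l x (F : nat -> {poly rat}) :
  \sum_(0 <= j < (minn l x).+1) F j = \sum_(0 <= j < x.+1 | (j <= l)%N) F j.
Proof.
have [lelx|ltxl] := leqP l x.
  by rewrite (big_nat_widen _ _ _ _ _ (lelx : l.+1 <= x.+1)%N); apply: eq_bigl => j; rewrite ltnS.
rewrite [RHS]big_mkcond; apply: eq_big_nat => j /andP[_ ltjx].
by rewrite ifT // (leq_trans _ (ltnW ltxl)) // -ltnS.
Qed.

Lemma hook_box_gfS k l len top :
  \sum_(0 <= x < top.+1) 'X^x * hook_box_gf k l len x = hook_box_gf k.+1 l len.+1 top.
Proof.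
rewrite /hook_box_gf ltnS; case: leqP => [lelenk|ltklen]; first by rewrite -gauss_hockey.
pose G x j : {poly rat} :=
  'X^x * ('X^(j * k.+1) * gauss (k + (x - j)) (x - j) * gauss (len - k.+1 + j) j).
transitivity (\sum_(0 <= x < top.+1) \sum_(0 <= j < top.+1)
                 (if (j <= l)%N && (j <= x)%N then G x j else 0)).
  apply: eq_big_nat => x /andP[_ ltx].
  rewrite sum_minn mulr_sumr (big_nat_widen _ _ _ _ _ ltx) big_mkcond.
  by apply: eq_big_nat => j _; rewrite ltnS; case: ifP.
rewrite exchange_big_nat sum_minn [RHS]big_mkcond; apply: eq_big_nat => j /andP[_ ltj].
case: ifP => lejl; last by rewrite big1 // => x _; rewrite lejl.
rewrite (@big_cat_nat _ _ _ j) ?(ltnW ltj) // big1_seq => [|x /andP[_]]; last first.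
  by rewrite mem_index_iota => /andP[_ ltxj]; rewrite leqNgt ltxj.
rewrite [LHS]/= add0r -{1}[j]add0n big_addn (_ : top.+1 - j = (top - j).+1)%N; last by lia.
rewrite -(@gauss_hockey _ k (top - j)) mulr_sumr mulr_suml; apply: eq_big_nat => y _.
rewrite /G addnK leq_addl /= (_ : len.+1 - k.+2 = len - k.+1)%N //.
rewrite !mulrA -exprD (_ : y + j + j * k.+1 = j * k.+2 + y)%N ?exprD; last by ring.
by ring.
Qed.

Lemma hook_gfE k l B len top : (top < B)%N ->
  hook_gf k l B len top = hook_box_gf k l len top.
Proof.
elim: k len top => [|k IH] [|len] top lttopB; rewrite ?hook_gf_len0.
- by rewrite /hook_box_gf gaussnn.
- rewrite hook_gf0 // /hook_box_gf -gauss_hockey; apply: eq_big_nat => j _.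
  by rewrite muln1 add0n gaussnn mulr1 subn1.
- by rewrite /hook_box_gf gaussnn.
- rewrite hook_gfS // -hook_box_gfS; apply: eq_big_nat => x /andP[_ ltx].
  by rewrite IH // (leq_trans ltx).
Qed.

Lemma in_hookE k l m (t : m.-tuple 'I_m.+1) :
  in_hook k l t = in_hook_box k l m (map val t) && (sumn (map val t) == m).
Proof.
rewrite /in_hook /in_hook_box /parts_of.
have -> : all (geq m) [seq val i | i <- t].
  by apply/allP => x /mapP[i _ ->]; rewrite /= -ltnS ltn_ord.
by case: (sorted _ _); case: (sumn _ == m); case: (all _ _).
Qed.

Lemma H_card_coef k l m : (H_card k l m)%:R = (hook_gf k l m.+1 m m)`_m :> rat.
Proof.
rewrite /H_card /hook_gf coef_sum -sum1_card natr_sum big_mkcond [RHS]big_mkcond /=.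
apply: eq_bigr => t _; rewrite inE in_hookE coefXn eq_sym.
by case: (in_hook_box _ _ _ _); case: (m == _).
Qed.

Lemma gauss_upto_inv_qpoch d n a b : (d <= b)%N -> (d <= n)%N ->
  eq_upto d (gauss (a + b) b) (inv_qpoch n a).
Proof.
move=> ledb ledn; apply: (@eq_upto_inv_uniq _ _ (qpoch a)); last exact: inv_qpochP.
by have := gauss_qpoch_subn_upto (leq_addl a b) ledb; rewrite addnK.
Qed.

Lemma gauss_upto_inv_qpochr d n a b : (d <= a)%N -> (d <= n)%N ->
  eq_upto d (gauss (a + b) b) (inv_qpoch n b).
Proof.
move=> leda ledn; apply: (@eq_upto_inv_uniq _ _ (qpoch b)); last exact: inv_qpochP.
by apply: gauss_qpoch_upto; rewrite ?leq_addl ?addnK.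
Qed.

Lemma inv_qpoch_upto_mono d n a b : (d <= a <= b)%N -> (d <= n)%N ->
  eq_upto d (inv_qpoch n a) (inv_qpoch n b).
Proof.
move=> /andP[leda leab] ledn; apply: (@eq_upto_inv_uniq _ _ (qpoch b)); last exact: inv_qpochP.
rewrite (qpoch_split leab) mulrA -[X in eq_upto _ _ X](mulr1 1).
by apply: eq_uptoM; [apply: inv_qpochP | apply: eq_upto_prod1].
Qed.

Lemma G_approx_upto_head d n k l : (d <= k)%N ->
  eq_upto d (G_approx n k l) (inv_qpoch n k).
Proof.
move=> ledk; rewrite /G_approx big_nat_recl // mul0n expr0 mul1r inv_qpoch0 mulr1.
rewrite -[X in eq_upto _ _ X]addr0; apply: eq_uptoD (eq_upto_refl _ _) _.
apply/eq_uptoP => i lei; rewrite coef0 coef_sum big1_seq // => j _.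
by rewrite coefXnM ifT // mulSn; lia.
Qed.

Lemma hook_box_gf_upto n k l i : (i <= n)%N ->
  eq_upto i (hook_box_gf k l i i) (G_approx n k l).
Proof.
move=> lein; rewrite /hook_box_gf; case: leqP => [leik|ltki].
  apply: eq_upto_trans (eq_upto_sym (G_approx_upto_head n l leik)).
  apply: eq_upto_trans (gauss_upto_inv_qpoch _ (leqnn i) lein) _.
  by apply: inv_qpoch_upto_mono lein; rewrite leqnn.
rewrite /G_approx minnC sum_minn big_mkcond; apply: eq_upto_sum_nat => j /andP[_ ltjl].
case: ifP => [leji|/negbT]; last first.
  by rewrite -ltnNge => ltij; apply/eq_upto_sym/eq_uptoXnM0; rewrite mulnS; lia.
have [ltij|leij] := ltnP i (j * k.+1).
  by rewrite -mulrA; apply: eq_upto_trans (eq_uptoXnM0 _ ltij) (eq_upto_sym (eq_uptoXnM0 _ ltij)).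
have ledn : (i - j * k.+1 <= n)%N by rewrite (leq_trans (leq_subr _ _)).
rewrite -mulrA; apply/eq_uptoXnM/eq_uptoM.
  by apply: gauss_upto_inv_qpoch => //; rewrite leq_sub2l // mulnS; lia.
case: j {ltjl leji leij ledn} => [|j]; first by rewrite gauss0 inv_qpoch0 eq_upto_refl.
by apply: gauss_upto_inv_qpochr => //; rewrite mulSn; lia.
Qed.

Lemma G_trunc_upto k l n : eq_upto n (G_trunc k l n) (G_approx n k l).
Proof.
apply/eq_uptoP => i lein.
rewrite -(eq_uptoP _ _ _ (hook_box_gf_upto k l lein)) // -(@hook_gfE _ _ i.+1) // -H_card_coef.
rewrite /G_trunc coef_sum (bigD1_seq i) ?mem_index_iota ?iota_uniq //=.
rewrite coefZ coefXn eqxx mulr1 big1 ?addr0 // => j neji.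
by rewrite coefZ coefXn eq_sym (negbTE neji) mulr0.
Qed.

Theorem theorem3 (k l n : nat) :
  (G_trunc k l n * \prod_(1 <= i < (k + l).+1) (1 - 'X^i)) `_ n = (Apoly k l) `_ n.
Proof.
have trunc := eq_uptoM (G_trunc_upto k l n) (eq_upto_refl n (qpoch (k + l))).
have /eq_uptoP -> // := eq_upto_trans trunc (G_approx_qpoch n k l).
by rewrite Apoly_hook_numer.
Qed.
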